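(* Let $\mathcal{A}$ and $\mathcal{B}$ be unital complex algebras with faithful and regular Sylvester rank functions $\mathrm{rk}_{\mathcal{A}}$ and $\mathrm{rk}_{\mathcal{B}}$. Let $X=(X_1,\dots,X_d)\in\mathcal{A}^d$ and $Y=(Y_1,\dots,Y_d)\in\mathcal{B}^d$ be such that for any matrix $A$ over $\mathbb{C}\langle x_1,\dots,x_d\rangle$, $$\mathrm{rk}_{\mathcal{B}}(A(Y))\le\mathrm{rk}_{\mathcal{A}}(A(X)).$$ Then: (1) there is a unique specialization from the rational closure $\mathcal{A}_X$ to the rational closure $\mathcal{B}_Y$; (2) for any rational expression $R$ in $x_1,\dots,x_d$ such that $R(Y)$ is well-defined, $R(X)$ is also well-defined and $\mathrm{rk}_{\mathcal{B}}(R(Y))\le\mathrm{rk}_{\mathcal{A}}(R(X))$.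
   Context: A Sylvester rank function on a unital complex algebra $\mathcal{A}$ is a function $\mathrm{rk}$ from rectangular matrices over $\mathcal{A}$ to $[0,\infty)$ with: $\mathrm{rk}(0)=0$, $\mathrm{rk}(1)=1$; $\mathrm{rk}(AB)\le\min(\mathrm{rk}A,\mathrm{rk}B)$; $\mathrm{rk}(A\oplus B)=\mathrm{rk}A+\mathrm{rk}B$; $\mathrm{rk}\begin{pmatrix}A&C\\0&B\end{pmatrix}\ge\mathrm{rk}A+\mathrm{rk}B$. It is faithful if $\mathrm{rk}(A)>0$ for all nonzero $A$, and regular if every $A\in M_n(\mathcal{A})$ with $\mathrm{rk}(A)=n$ is invertible. A $\mathbb{C}\langle x_1,\dots,x_d\rangle$-algebra is a unital algebra $\mathcal{C}$ with a homomorphism $\phi:\mathbb{C}\langle x_1,\dots,x_d\rangle\to\mathcal{C}$; $\Sigma_\phi$ is the set of square matrices $A$ over $\mathbb{C}\langle x_1,\dots,x_d\rangle$ (of any size $n$) with $\phi(A)$ invertible in $M_n(\mathcal{C})$; for a tuple $X$ in $\mathcal{C}$ with $\phi(P)=P(X)$ write $\Sigma_X$. The rational closure $\mathcal{A}_X$ is the set of all entries of $A(X)^{-1}$, $A\in\Sigma_X$; it is a subalgebra containing the algebra generated by $X$, regarded as a $\mathbb{C}\langle x\rangle$-algebra via $P\mapsto P(X)$. A subhomomorphism from a $\mathbb{C}\langle x\rangle$-algebra $(\mathcal{C},\phi_{\mathcal{C}})$ to $(\mathcal{D},\phi_{\mathcal{D}})$ is a homomorphism $f:\mathcal{C}_f\to\mathcal{D}$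 defined on a subalgebra $\mathcal{C}_f\supseteq\phi_{\mathcal{C}}(\mathbb{C}\langle x\rangle)$, with structure map $\phi_f=\phi_{\mathcal{C}}$, such that $f\circ\phi_f=\phi_{\mathcal{D}}$ and $\Sigma_{\phi_{\mathcal{D}}}\subseteq\Sigma_{\phi_f}$. Two subhomomorphisms are equivalent if they agree on a subalgebra on which their common restriction is again a subhomomorphism; a specialization is an equivalence class. Rational expressions (combinations of scalars and $x_i$ via $+,\cdot,{}^{-1}$, parentheses) are evaluated recursively in an algebra, an inverse being defined only where the argument is invertible; ''well-defined'' means $X$ lies in the domain. *)

From HB Require Import structures.
From mathcomp Require Import all_boot all_order all_algebra.
From mathcomp Require Import boolp reals.
From mathcomp.real_closed Require Import complex.
From mathcomp.multinomials Require Import monalg.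

Set Implicit Arguments.
Unset Strict Implicit.
Unset Printing Implicit Defensive.

Import Order.TTheory GRing.Theory Num.Theory.
Local Open Scope ring_scope.

Section SylvesterDefs.
Variable R : realType.
Local Notation C := (R[i]).

(* The free algebra C<x_1,...,x_d>: the monoid algebra of the free monoid on
   d letters. *)
Definition ncpoly (d : nat) := {malg C[{fmonom 'I_d}]}.

Section InAlgebra.
Variable A : algType C.

Definition nc_eval (d : nat) (X : 'I_d -> A) (P : ncpoly d) : A :=
  mmap (fun c : C => c%:A) (fun m : {fmonom 'I_d} => \prod_(i <- fmonom_val m) X i) P.

Definition nc_evalmx (d : nat) (X : 'I_d -> A) m n
    (M : 'M[ncpoly d]_(m, n)) : 'M[A]_(m, n) :=
  map_mx (nc_eval X) M.

Definition mx_invertible_in (S : pred A) n (M : 'M[A]_n) : Prop :=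
  exists N : 'M[A]_n, (forall i j, S (N i j)) /\
    M *m N = 1%:M /\ N *m M = 1%:M.

Definition mx_invertible n (M : 'M[A]_n) : Prop := mx_invertible_in predT M.

Definition rank_fun := forall m n, 'M[A]_(m, n) -> R.

Record sylvester_rank (rk : rank_fun) : Prop := {
  srk_ge0 : forall m n (M : 'M[A]_(m, n)), 0 <= rk m n M;
  srk0 : rk 1%N 1%N 0 = 0;
  srk1 : rk 1%N 1%N 1%:M = 1;
  srk_mul : forall m n p (M : 'M[A]_(m, n)) (N : 'M[A]_(n, p)),
      rk m p (M *m N) <= Num.min (rk m n M) (rk n p N);
  srk_diag : forall m1 n1 m2 n2 (M : 'M[A]_(m1, n1)) (N : 'M[A]_(m2, n2)),
      rk _ _ (block_mx M 0 0 N) = rk _ _ M + rk _ _ N;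
  srk_trig : forall m1 n1 m2 n2 (M : 'M[A]_(m1, n1)) (N : 'M[A]_(m2, n2))
      (Q : 'M[A]_(m1, n2)),
      rk _ _ M + rk _ _ N <= rk _ _ (block_mx M Q 0 N)
}.

Definition rank_faithful (rk : rank_fun) : Prop :=
  forall m n (M : 'M[A]_(m, n)), M != 0 -> 0 < rk m n M.

Definition rank_regular (rk : rank_fun) : Prop :=
  forall n (M : 'M[A]_n), rk n n M = n%:R -> mx_invertible M.

Definition rat_closure (d : nat) (X : 'I_d -> A) : pred A :=
  fun a => `[< exists n (P : 'M[ncpoly d]_n) (N : 'M[A]_n),
      nc_evalmx X P *m N = 1%:M /\ N *m nc_evalmx X P = 1%:M /\
      exists i j, a = N i j >].

Inductive rexpr (d : nat) : Type :=
| RConst of C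
| RVar of 'I_d
| RAdd of rexpr d & rexpr d
| RMul of rexpr d & rexpr d
| RInv of rexpr d.

(* rexpr_eval X r a : the rational expression r is well defined at X
   and its (recursively computed) value is a. *)
Inductive rexpr_eval (d : nat) (X : 'I_d -> A) : rexpr d -> A -> Prop :=
| REvConst c : rexpr_eval X (RConst d c) (c%:A)
| REvVar i : rexpr_eval X (RVar i) (X i)
| REvAdd r s a b : rexpr_eval X r a -> rexpr_eval X s b ->
    rexpr_eval X (RAdd r s) (a + b)
| REvMul r s a b : rexpr_eval X r a -> rexpr_eval X s b ->
    rexpr_eval X (RMul r s) (a * b)
| REvInv r a b : rexpr_eval X r a -> a * b = 1 -> b * a = 1 ->
    rexpr_eval X (RInv r) b.

End InAlgebra.

Section Specialization.
Variables A B : algType C.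
Variable d : nat.
Variables (X : 'I_d -> A) (Y : 'I_d -> B).

(* A subhomomorphism from the C<x>-algebra (A_X, P |-> P(X)) to the
   C<x>-algebra (B_Y, P |-> P(Y)): a homomorphism f defined on a subalgebra
   S of A_X containing the image of C<x>, with f(P(X)) = P(Y), and
   Sigma_{B_Y} included in Sigma_f (invertibility over S). *)
Record subhom (S : pred A) (f : A -> B) : Prop := {
  subhom_sub : {subset S <= rat_closure X};
  subhom_subalg : GRing.subalg_closed S;
  subhom_gen : forall P : ncpoly d, nc_eval X P \in S;
  subhom_1 : f 1 = 1;
  subhom_add : {in S &, forall a b, f (a + b) = f a + f b};
  subhom_mul : {in S &, forall a b, f (a * b) = f a * f b};
  subhom_scale : forall (c : C), {in S, forall a, f (c *: a) = c *: f a};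
  subhom_range : {in S, forall a, f a \in rat_closure Y};
  subhom_struct : forall P : ncpoly d, f (nc_eval X P) = nc_eval Y P;
  subhom_sigma : forall n (P : 'M[ncpoly d]_n),
      mx_invertible_in (rat_closure Y) (nc_evalmx Y P) ->
      mx_invertible_in S (nc_evalmx X P)
}.

Definition subhom_equiv (S1 : pred A) (f1 : A -> B) (S2 : pred A) (f2 : A -> B)
    : Prop :=
  exists S : pred A, [/\ {subset S <= S1}, {subset S <= S2},
      {in S, f1 =1 f2} & subhom S f1].

(* There is a unique specialization (equivalence class of subhomomorphisms)
   from A_X to B_Y. *)
Definition unique_specialization : Prop :=
  (exists (S : pred A) (f : A -> B), subhom S f) /\
  (forall S1 f1 S2 f2, subhom S1 f1 -> subhom S2 f2 -> subhom_equiv S1 f1 S2 f2).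

End Specialization.
End SylvesterDefs.

From HB Require Import structures.
From mathcomp Require Import all_boot all_order all_algebra.
From mathcomp Require Import boolp classical_sets reals.
From mathcomp.real_closed Require Import complex.
From mathcomp.multinomials Require Import monalg.
Import Order.TTheory GRing.Theory Num.Theory.
Local Open Scope ring_scope.

(* Elements of the rational closures are handled through Cohn's linear
   representations: a triple (M, u, v) of matrices over C<x> represents
   u(Z) M(Z)^-1 v(Z) at every Z where M(Z) is invertible.  The specialization
   sends the value at X of a triple to its value at Y.  By the Schur complement,
   rk [[M, v], [u, 0]] = n + rk (u M^-1 v), so the rank hypothesis on bordered
   matrices gives rk_B(b) <= rk_A(a) for the two values of one triple; with
   faithfulness of rk_B this makes the map well defined, and regularity of rk_A
   turns invertibility of M(Y) into invertibility of M(X).  A subhomomorphism has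
   to send M(X)^-1 to M(Y)^-1, hence agrees with this map on its domain.  Inverses
   are again represented by bordered triples, which handles rational expressions. *)

Section NcEval.
Variables (R : realType) (A : algType R[i]) (d : nat) (Z : 'I_d -> A).

Definition monom_eval (m : {fmonom 'I_d}) : A := \prod_(i <- fmonom_val m) Z i.

Lemma monom_eval_is_mmorphism : mmorphism monom_eval.
Proof.
split => [m1 m2|].
  by change (monom_eval (fmmul m1 m2) = monom_eval m1 * monom_eval m2);
    rewrite /monom_eval fmmulE big_cat.
by change (monom_eval (fmone _) = 1); rewrite /monom_eval fmoneE big_nil.
Qed.

HB.instance Definition _ :=
  monalg.isMultiplicative.Build _ _ monom_eval monom_eval_is_mmorphism.

Lemma nc_eval_is_zmod_morphism : zmod_morphism (nc_eval Z).
Proof. exact: (@mmap_is_additive _ _ _ (GRing.in_alg A) monom_eval). Qed.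

HB.instance Definition _ := GRing.isZmodMorphism.Build (ncpoly R d) A (nc_eval Z)
  nc_eval_is_zmod_morphism.

Lemma nc_eval_is_monoid_morphism : monoid_morphism (nc_eval Z).
Proof.
have [evalM eval1] := @commr_mmap_is_multiplicative _ _ _ (GRing.in_alg A) monom_eval
  (fun c _ m => comm_alg _ (monom_eval m)).
by split.
Qed.

HB.instance Definition _ := GRing.isMonoidMorphism.Build (ncpoly R d) A (nc_eval Z)
  nc_eval_is_monoid_morphism.

Lemma nc_evalC (c : R[i]) : nc_eval Z (c%:MP : ncpoly R d) = c%:A.
Proof. exact: (@mmapC _ _ _ (GRing.in_alg A) monom_eval). Qed.

Lemma nc_eval_var (i : 'I_d) : nc_eval Z << (1 : R[i]) *g fmu i >> = Z i.
Proof.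
rewrite /nc_eval (@mmapU _ _ _ (GRing.in_alg A) monom_eval) /= scale1r mul1r.
by rewrite /monom_eval fmuE big_seq1.
Qed.

End NcEval.

Section MatrixInverse.
Context {T : pzRingType}.

Definition mx_inverse {n} (M N : 'M[T]_n) := M *m N = 1%:M /\ N *m M = 1%:M.

Definition border_mx {n} (M : 'M[T]_n) (u : 'M[T]_(1, n)) (v : 'M[T]_(n, 1)) :
  'M[T]_(n + 1) := block_mx M v u 0.

Lemma scalar_mx11_inj : injective (fun x : T => x%:M : 'M[T]_1).
Proof. by move=> x y /matrixP/(_ 0 0); rewrite !mxE. Qed.

Lemma mx_inverse1 n : mx_inverse (1%:M : 'M[T]_n) 1%:M.
Proof. by split; rewrite mulmx1. Qed.

Lemma mx_inverse_rinv_uniq {n} {M N N' : 'M[T]_n} :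
  mx_inverse M N -> M *m N' = 1%:M -> N = N'.
Proof. by move=> [_ NM1] MN'1; rewrite -[N]mulmx1 -MN'1 mulmxA NM1 mul1mx. Qed.

Lemma mx_inverse_block_upper {m n} {P P' : 'M[T]_m} {Q Q' : 'M[T]_n} (W : 'M[T]_(m, n)) :
  mx_inverse P P' -> mx_inverse Q Q' ->
  mx_inverse (block_mx P W 0 Q) (block_mx P' (- (P' *m W *m Q')) 0 Q').
Proof.
move=> [PP' P'P] [QQ' Q'Q].
split; rewrite mulmx_block !(mul0mx, mulmx0, addr0, add0r).
  by rewrite PP' QQ' mulmxN !mulmxA PP' mul1mx addNr -scalar_mx_block.
by rewrite P'P Q'Q mulNmx -[_ *m Q]mulmxA Q'Q mulmx1 addrN -scalar_mx_block.
Qed.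

Lemma mx_inverse_block_lower1 {m n} (W : 'M[T]_(n, m)) :
  mx_inverse (block_mx 1%:M 0 W 1%:M) (block_mx 1%:M 0 (- W) 1%:M).
Proof.
by split; rewrite mulmx_block !(mul0mx, mulmx0, addr0, add0r, mul1mx, mulmx1)
  ?addNr ?addrN -scalar_mx_block.
Qed.

Lemma border_mx_corner n (N : 'M[T]_(n + 1)) :
  row_mx 0 (- 1%:M) *m N *m col_mx 0 1%:M = - drsubmx N.
Proof.
rewrite -[N in LHS]submxK mul_row_block mul_row_col.
by rewrite !(mul0mx, add0r, mulmx0, addr0, mulNmx, mul1mx, mulmx1).
Qed.

Lemma border_mx_factor {n} {M M' : 'M[T]_n} (u : 'M[T]_(1, n)) (v : 'M[T]_(n, 1)) :
  mx_inverse M M' ->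
  border_mx M u v = block_mx 1%:M 0 (u *m M') 1%:M *m
    block_mx M 0 0 (- (u *m M' *m v)) *m block_mx 1%:M (M' *m v) 0 1%:M.
Proof.
case=> MM'1 M'M1.
rewrite !mulmx_block !(mul0mx, mulmx0, addr0, add0r, mul1mx, mulmx1, mulmxN).
by rewrite !mulmxA MM'1 mul1mx -(mulmxA u M' M) M'M1 mulmx1 addrN.
Qed.

Lemma mx_inverse_border {n} {M M' : 'M[T]_n} {u : 'M[T]_(1, n)} {v : 'M[T]_(n, 1)}
    {C : 'M[T]_1} :
  mx_inverse M M' -> mx_inverse (u *m M' *m v) C ->
  mx_inverse (border_mx M u v)
    (block_mx (M' - M' *m v *m C *m u *m M') (M' *m v *m C) (C *m u *m M') (- C)).
Proof.
case=> MM'1 M'M1 [aC1 Ca1].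
have {}Ca1 : C *m u *m M' *m v = 1%:M by rewrite -Ca1 !mulmxA.
have cancel_C p (W : 'M[T]_(p, 1)) : W *m C *m u *m M' *m v = W.
  by rewrite -[RHS]mulmx1 -Ca1 !mulmxA.
split; rewrite /border_mx mulmx_block.
  rewrite !(mulmxBr, mulmxN, mul0mx, mulmx0, addr0, oppr0) !mulmxA.
  rewrite MM'1 !mul1mx aC1 mul1mx subrK !addrN.
  by rewrite -scalar_mx_block.
rewrite !(mulmxBl, mulNmx, mul0mx, mulmx0, addr0, oppr0).
rewrite -!(mulmxA _ M' M) M'M1 !mulmx1 cancel_C Ca1 subrK !addrN.
by rewrite -scalar_mx_block.
Qed.

Lemma mx_inverse_border_inv {n} {M M' : 'M[T]_n} {u : 'M[T]_(1, n)} {v : 'M[T]_(n, 1)}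
    {N : 'M[T]_(n + 1)} :
  mx_inverse M M' -> mx_inverse (border_mx M u v) N ->
  mx_inverse (u *m M' *m v) (- drsubmx N).
Proof.
case=> MM'1 M'M1 [BN NB].
move: BN; rewrite -[N in LHS]submxK /border_mx mulmx_block (scalar_mx_block n 1).
case/eq_block_mx => _ /eqP; rewrite addr_eq0 !mul0mx !addr0 => /eqP Mq _ uq.
move: NB; rewrite -[N in LHS]submxK /border_mx mulmx_block (scalar_mx_block n 1).
case/eq_block_mx => _ _ /eqP; rewrite addr_eq0 !mulmx0 !addr0 => /eqP rM rv.
have q_eq : ursubmx N = - (M' *m v *m drsubmx N).
  by rewrite -[LHS]mul1mx -M'M1 -mulmxA Mq mulmxN mulmxA.
have r_eq : dlsubmx N = - (drsubmx N *m u *m M').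
  by rewrite -[LHS]mulmx1 -MM'1 mulmxA rM mulNmx.
split; first by rewrite -uq q_eq !mulmxN !mulmxA.
by rewrite -rv r_eq !mulNmx !mulmxA.
Qed.

End MatrixInverse.

Section SylvesterRank.
Context {R : realType} {A : algType R[i]} {rk : rank_fun A}.
Hypothesis srk : sylvester_rank rk.

Lemma srk_empty (M : 'M[A]_(0, 0)) : rk 0 0 M = 0.
Proof.
have := srk_diag srk M M; rewrite [block_mx _ _ _ _]flatmx0 [M]flatmx0.
by move/eqP; rewrite -subr_eq subrr eq_sym => /eqP.
Qed.

Lemma srk_id n : rk n n 1%:M = n%:R.
Proof.
elim: n => [|n IHn]; first exact: srk_empty.
rewrite -[n.+1]/(1 + n)%N (scalar_mx_block 1 n) (srk_diag srk) (srk1 srk) IHn.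
by rewrite -natr1 addrC.
Qed.

Lemma srk_mull {m n p} (M : 'M[A]_(m, n)) (N : 'M[A]_(n, p)) :
  rk _ _ (M *m N) <= rk _ _ M.
Proof. by have := srk_mul srk M N; rewrite le_min => /andP[]. Qed.

Lemma srk_mulr {m n p} (M : 'M[A]_(m, n)) (N : 'M[A]_(n, p)) :
  rk _ _ (M *m N) <= rk _ _ N.
Proof. by have := srk_mul srk M N; rewrite le_min => /andP[]. Qed.

Lemma srk_le_rows m n (M : 'M[A]_(m, n)) : rk m n M <= m%:R.
Proof. by rewrite -(srk_id m) -{1}(mul1mx M) srk_mull. Qed.

Lemma srk_mx_inverse {n} {M N : 'M[A]_n} : mx_inverse M N -> rk n n M = n%:R.
Proof.
move=> [MN1 _]; apply/le_anti; rewrite srk_le_rows /=.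
by rewrite -{1}(srk_id n) -MN1 srk_mull.
Qed.

Lemma srk_mul_inverse {m n} {P P' : 'M[A]_m} {Q Q' : 'M[A]_n} (L : 'M[A]_(m, n)) :
  mx_inverse P P' -> mx_inverse Q Q' -> rk _ _ (P *m L *m Q) = rk _ _ L.
Proof.
have le_mul (P1 : 'M[A]_m) (Q1 : 'M[A]_n) L1 : rk _ _ (P1 *m L1 *m Q1) <= rk _ _ L1.
  exact: le_trans (srk_mull _ _) (srk_mulr _ _).
move=> [_ P'P] [QQ' _]; apply/le_anti; rewrite le_mul /=.
have {1}-> : L = P' *m (P *m L *m Q) *m Q'.
  by rewrite !mulmxA P'P mul1mx -mulmxA QQ' mulmx1.
exact: le_mul.
Qed.

Lemma srk_opp m n (M : 'M[A]_(m, n)) : rk _ _ (- M) = rk _ _ M.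
Proof.
have le_opp (N : 'M[A]_(m, n)) : rk _ _ (- N) <= rk _ _ N.
  by rewrite -[N in - N]mul1mx -mulNmx srk_mulr.
by apply/le_anti; rewrite le_opp /= -{1}[M]opprK le_opp.
Qed.

Lemma srk_border {n} {M M' : 'M[A]_n} (u : 'M[A]_(1, n)) (v : 'M[A]_(n, 1)) :
  mx_inverse M M' -> rk _ _ (border_mx M u v) = n%:R + rk 1 1 (u *m M' *m v).
Proof.
move=> MM'; have := mx_inverse_block_upper (M' *m v) (mx_inverse1 n) (mx_inverse1 1).
rewrite mulmx1 mul1mx => upper.
rewrite (border_mx_factor u v MM') (srk_mul_inverse _ (mx_inverse_block_lower1 _) upper).
by rewrite (srk_diag srk) (srk_mx_inverse MM') srk_opp.
Qed.

End SylvesterRank.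

Section LinearRepresentation.
Context {R : realType} {A : algType R[i]} {d : nat} {Z : 'I_d -> A}.
Local Notation P := (ncpoly R d).
Local Notation ev := (nc_evalmx Z).

Definition linrep {n} (M : 'M[P]_n) (u : 'M[P]_(1, n)) (v : 'M[P]_(n, 1)) (a : A) :=
  exists M', mx_inverse (ev M) M' /\ ev u *m M' *m ev v = a%:M.

Lemma nc_evalmx_border n (M : 'M[P]_n) u v :
  ev (border_mx M u v) = border_mx (ev M) (ev u) (ev v).
Proof. by rewrite /nc_evalmx /border_mx map_block_mx map_mx0. Qed.

Lemma linrep_poly (p : P) : linrep (1%:M : 'M_1) p%:M 1%:M (nc_eval Z p).
Proof.
exists 1%:M; rewrite /nc_evalmx map_mx1 map_scalar_mx !mulmx1.
split => //; exact: mx_inverse1.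
Qed.

Lemma linrep_entry {n} {M : 'M[P]_n} {N} i j :
  mx_inverse (ev M) N -> linrep M (delta_mx 0 i) (delta_mx j 0) (N i j).
Proof.
move=> MN; exists N; split => //.
by rewrite /nc_evalmx !map_delta_mx -rowE -colE [LHS]mx11_scalar !mxE.
Qed.

Lemma linrep_add {n1 n2} {M1 : 'M[P]_n1} {u1 v1 a1} {M2 : 'M[P]_n2} {u2 v2 a2} :
  linrep M1 u1 v1 a1 -> linrep M2 u2 v2 a2 ->
  linrep (block_mx M1 0 0 M2) (row_mx u1 u2) (col_mx v1 v2) (a1 + a2).
Proof.
move=> [N1 [MN1 e1]] [N2 [MN2 e2]].
exists (block_mx N1 (- (N1 *m 0 *m N2)) 0 N2).
rewrite /nc_evalmx map_block_mx map_row_mx map_col_mx !map_mx0.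
split; first exact: mx_inverse_block_upper.
rewrite mul_row_block mul_row_col !(mulmx0, mul0mx, oppr0, addr0, add0r).
by rewrite e1 e2 raddfD.
Qed.

Lemma linrep_opp {n} {M : 'M[P]_n} {u v a} : linrep M u v a -> linrep M (- u) v (- a).
Proof.
move=> [N [MN e]]; exists N; split => //.
by rewrite /nc_evalmx map_mxN !mulNmx e raddfN.
Qed.

Lemma linrep_mul {n1 n2} {M1 : 'M[P]_n1} {u1 v1 a1} {M2 : 'M[P]_n2} {u2 v2 a2} :
  linrep M1 u1 v1 a1 -> linrep M2 u2 v2 a2 ->
  linrep (block_mx M1 (- (v1 *m u2)) 0 M2) (row_mx u1 0) (col_mx 0 v2) (a1 * a2).
Proof.
move=> [N1 [MN1 e1]] [N2 [MN2 e2]].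
exists (block_mx N1 (- (N1 *m ev (- (v1 *m u2)) *m N2)) 0 N2).
rewrite {1}/nc_evalmx map_block_mx map_mx0.
split; first exact: mx_inverse_block_upper.
rewrite /nc_evalmx map_row_mx map_col_mx !map_mx0 map_mxN map_mxM.
rewrite mul_row_block mul_row_col !(mulmx0, mul0mx, addr0, add0r).
rewrite !(mulmxN, mulNmx) opprK !mulmxA e1 -!mulmxA.
by rewrite -!mulmxA in e2; rewrite e2 scalar_mxM.
Qed.

Lemma linrep_inv {n} {M : 'M[P]_n} {u v a c} :
  linrep M u v a -> a * c = 1 -> c * a = 1 ->
  linrep (border_mx M u v) (row_mx 0 (- 1%:M)) (col_mx 0 1%:M) c.
Proof.
move=> [M' [MM' uMv]] ac ca.
have aC : mx_inverse (ev u *m M' *m ev v) c%:M.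
  by rewrite uMv; split; rewrite -scalar_mxM ?ac ?ca.
eexists; split; first by rewrite nc_evalmx_border; exact: mx_inverse_border MM' aC.
rewrite /nc_evalmx map_row_mx map_col_mx !map_mx0 map_mxN map_mx1.
by rewrite border_mx_corner block_mxKdr opprK.
Qed.

Lemma linrep_border_inv {n} {M : 'M[P]_n} {u v a} :
  linrep M u v a -> (exists N, mx_inverse (ev (border_mx M u v)) N) ->
  exists c, [/\ a * c = 1, c * a = 1 &
    linrep (border_mx M u v) (row_mx 0 (- 1%:M)) (col_mx 0 1%:M) c].
Proof.
move=> [M' [MM' uMv]] [N]; rewrite nc_evalmx_border => BN.
have := mx_inverse_border_inv MM' BN.
rewrite uMv [- drsubmx N]mx11_scalar => -[].
rewrite -!scalar_mxM => /scalar_mx11_inj ac /scalar_mx11_inj ca.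
exists ((- drsubmx N) 0 0); split => //; exists N.
split; first by rewrite nc_evalmx_border.
rewrite /nc_evalmx map_row_mx map_col_mx !map_mx0 map_mxN map_mx1.
by rewrite border_mx_corner -mx11_scalar.
Qed.

Lemma linrep_rat_closure {n} {M : 'M[P]_n} {u v a} : linrep M u v a -> rat_closure Z a.
Proof.
move=> [M' [MM' uMv]].
(* The top right entry of the inverse of [[1, -u, 0], [0, M, -v], [0, 0, 1]]
   is u M^-1 v. *)
have inner := mx_inverse_block_upper (- ev u) (mx_inverse1 1) MM'.
have outer := mx_inverse_block_upper (col_mx 0 (- ev v)) inner (mx_inverse1 1).
apply/asboolP; exists (1 + n + 1)%N.
exists (block_mx (block_mx 1%:M (- u) 0 M) (col_mx 0 (- v)) 0 1%:M); eexists.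
rewrite /nc_evalmx !map_block_mx map_col_mx !map_mxN !map_mx0 !map_mx1.
case: outer => BN NB; split; first exact: BN; split; first exact: NB.
exists (lshift 1 (lshift n 0)), (rshift (1 + n) 0).
rewrite block_mxEur mulmx1 mul_block_col !mul0mx !add0r !mul1mx !mulmxN !mulNmx !opprK.
by rewrite sub0r mxE col_mxEu mxE opprK uMv mxE eqxx mulr1n.
Qed.

End LinearRepresentation.

Arguments linrep {R A d} Z {n}.

Lemma rexpr_eval_fun {R : realType} {A : algType R[i]} {d} {Z : 'I_d -> A} {r a b} :
  rexpr_eval Z r a -> rexpr_eval Z r b -> a = b.
Proof.
move=> ra; elim: ra b => {r a}.
- by move=> c b rb; inversion_clear rb.
- by move=> i b rb; inversion_clear rb.
- move=> r s a a' _ IHr _ IHs b rb.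
  inversion_clear rb as [| | ? ? b1 b2 rb1 rb2 | |].
  by rewrite (IHr _ rb1) (IHs _ rb2).
- move=> r s a a' _ IHr _ IHs b rb.
  inversion_clear rb as [| | | ? ? b1 b2 rb1 rb2 |].
  by rewrite (IHr _ rb1) (IHs _ rb2).
- move=> r a a' _ IHr aa' a'a b rb.
  inversion_clear rb as [| | | | ? a1 ? ra1 a1b ba1].
  by rewrite -[a']mulr1 -a1b -(IHr _ ra1) mulrA a'a mul1r.
Qed.

Section Subhomomorphism.
Context {R : realType} {A B : algType R[i]} {d : nat}.
Context {X : 'I_d -> A} {Y : 'I_d -> B} {S : pred A} {f : A -> B}.
Hypothesis fS : subhom X Y S f.

HB.instance Definition _ := GRing.isSubalgClosed.Build _ _ S (subhom_subalg fS).

Lemma subhom0 : f 0 = 0.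
Proof.
have S0 : 0 \in S by exact: rpred0.
have := subhom_add fS S0 S0.
by rewrite addr0 => /eqP; rewrite -subr_eq subrr eq_sym => /eqP.
Qed.

Lemma subhom_sum n (F : 'I_n -> A) : (forall k, F k \in S) ->
  f (\sum_k F k) = \sum_k f (F k).
Proof.
move=> FS; suff [] : \sum_k F k \in S /\ f (\sum_k F k) = \sum_k f (F k) by [].
apply: (big_ind2 (fun x y => x \in S /\ f x = y)).
- by rewrite rpred0 subhom0.
- move=> x1 x2 y1 y2 [x1S <-] [x2S <-].
  by rewrite rpredD ?(subhom_add fS).
- by move=> k _; split.
Qed.

Lemma subhom_mulmx {m n p} :
  {in mxOver S & mxOver S, forall (M : 'M_(m, n)) (N : 'M_(n, p)),
    map_mx f (M *m N) = map_mx f M *m map_mx f N}.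
Proof.
move=> M N /mxOverP MS /mxOverP NS; apply/matrixP => i j; rewrite !mxE.
rewrite subhom_sum => [|k]; last by rewrite rpredM.
by apply: eq_bigr => k _; rewrite (subhom_mul fS) ?mxE.
Qed.

Lemma subhom_map1 n : map_mx f (1%:M : 'M_n) = 1%:M.
Proof.
apply/matrixP => i j; rewrite !mxE.
by case: (i == j); [exact: subhom_1 fS | exact: subhom0].
Qed.

Lemma evalmx_mxOver {m n} (w : 'M[ncpoly R d]_(m, n)) : nc_evalmx X w \is a mxOver S.
Proof. by apply/mxOverP => i j; rewrite mxE (subhom_gen fS). Qed.

Lemma subhom_map_evalmx {m n} (w : 'M[ncpoly R d]_(m, n)) :
  map_mx f (nc_evalmx X w) = nc_evalmx Y w.
Proof. by apply/matrixP => i j; rewrite !mxE (subhom_struct fS). Qed.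

Lemma subhom_linrep {n} {M : 'M[ncpoly R d]_n} {u v a b} :
  linrep Y M u v b -> linrep X M u v a -> a \in S /\ f a = b.
Proof.
move=> [NY [MNY eY]] [NX [MNX eX]].
have NY_rat : forall i j, rat_closure Y (NY i j).
  by move=> i j; apply: linrep_rat_closure (linrep_entry i j MNY).
have [N [NS [MN1 _]]] := subhom_sigma fS (ex_intro _ NY (conj NY_rat MNY)).
have NX_S : NX \is a mxOver S.
  by apply/mxOverP; rewrite (mx_inverse_rinv_uniq MNX MN1).
have fNX : NY = map_mx f NX.
  apply: mx_inverse_rinv_uniq MNY _.
  by rewrite -subhom_map_evalmx -subhom_mulmx ?evalmx_mxOver // (proj1 MNX) subhom_map1.
have uNv_S : nc_evalmx X u *m NX *m nc_evalmx X v \is a mxOver S.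
  by rewrite !mxOverM ?evalmx_mxOver.
split; first by move/mxOverP: uNv_S => /(_ 0 0); rewrite eX mxE.
have fuNv : map_mx f (nc_evalmx X u *m NX *m nc_evalmx X v) = b%:M.
  by rewrite !subhom_mulmx ?mxOverM ?evalmx_mxOver // !subhom_map_evalmx -fNX.
by move: fuNv; rewrite eX => /matrixP/(_ 0 0); rewrite !mxE.
Qed.

Lemma subhom_eq_in g : {in S, f =1 g} -> subhom X Y S g.
Proof.
move=> fg; have [? ? ? _ fD fM fZ rangeS struct ?] := fS.
split => //.
- by rewrite -fg ?rpred1 // (subhom_1 fS).
- by move=> a b aS bS; rewrite -!fg ?rpredD ?fD.
- by move=> a b aS bS; rewrite -!fg ?rpredM ?fM.
- by move=> c a aS; rewrite -!fg ?rpredZ ?fZ.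
- by move=> a aS; rewrite -fg ?rangeS.
- by move=> p; rewrite -fg ?struct.
Qed.

End Subhomomorphism.

Section Specialization.
Context {R : realType} {A B : algType R[i]}.
Context {rkA : rank_fun A} {rkB : rank_fun B}.
Hypotheses (srkA : sylvester_rank rkA) (regA : rank_regular rkA).
Hypotheses (srkB : sylvester_rank rkB) (faithB : rank_faithful rkB).
Context {d : nat}.
Context {X : 'I_d -> A} {Y : 'I_d -> B}.
Hypothesis rk_YX : forall {m n} (P : 'M[ncpoly R d]_(m, n)),
  rkB m n (nc_evalmx Y P) <= rkA m n (nc_evalmx X P).
Local Notation P := (ncpoly R d).

Lemma evalmx_invertible_transfer {n} {M : 'M[P]_n} :
  (exists N, mx_inverse (nc_evalmx Y M) N) -> exists N, mx_inverse (nc_evalmx X M) N.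
Proof.
move=> [N /(srk_mx_inverse srkB) rkYM].
have /regA [N' [_ [MN' N'M]]] : rkA n n (nc_evalmx X M) = n%:R.
  by apply/le_anti; rewrite srk_le_rows // -rkYM rk_YX.
by exists N'.
Qed.

Lemma linrep_rank_le {n} {M : 'M[P]_n} {u v a b} :
  linrep Y M u v b -> linrep X M u v a -> rkB 1 1 b%:M <= rkA 1 1 a%:M.
Proof.
move=> [NY [MNY <-]] [NX [MNX <-]].
have := rk_YX (border_mx M u v); rewrite !nc_evalmx_border.
by rewrite (srk_border srkB _ _ MNY) (srk_border srkA _ _ MNX) lerD2l.
Qed.

Definition jointrep (a : A) (b : B) :=
  exists n (M : 'M[P]_n) u v, linrep Y M u v b /\ linrep X M u v a.

Lemma jointrep_poly (p : P) : jointrep (nc_eval X p) (nc_eval Y p).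
Proof. by exists 1%N, 1%:M, p%:M, 1%:M; split; apply: linrep_poly. Qed.

Lemma jointrep_add {a1 b1 a2 b2} :
  jointrep a1 b1 -> jointrep a2 b2 -> jointrep (a1 + a2) (b1 + b2).
Proof.
move=> [n1 [M1 [u1 [v1 [Y1 X1]]]]] [n2 [M2 [u2 [v2 [Y2 X2]]]]].
by do 4 eexists; split; apply: linrep_add; eassumption.
Qed.

Lemma jointrep_mul {a1 b1 a2 b2} :
  jointrep a1 b1 -> jointrep a2 b2 -> jointrep (a1 * a2) (b1 * b2).
Proof.
move=> [n1 [M1 [u1 [v1 [Y1 X1]]]]] [n2 [M2 [u2 [v2 [Y2 X2]]]]].
by do 4 eexists; split; apply: linrep_mul; eassumption.
Qed.

Lemma jointrep_opp {a b} : jointrep a b -> jointrep (- a) (- b).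
Proof.
move=> [n [M [u [v [Ya Xa]]]]].
by do 4 eexists; split; apply: linrep_opp; eassumption.
Qed.

Lemma jointrep_inv {a b b'} :
  jointrep a b -> b * b' = 1 -> b' * b = 1 ->
  exists a', [/\ a * a' = 1, a' * a = 1 & jointrep a' b'].
Proof.
move=> [n [M [u [v [Yb Xa]]]]] bb' b'b.
have Yb' := linrep_inv Yb bb' b'b.
have [|a' [aa' a'a Xa']] := linrep_border_inv Xa.
  by apply: evalmx_invertible_transfer; case: Yb' => N [BN _]; exists N.
by exists a'; split => //; do 4 eexists; split; eassumption.
Qed.

Lemma jointrep0 {b} : jointrep 0 b -> b = 0.
Proof.
move=> [n [M [u [v [Yb X0]]]]].
have := linrep_rank_le Yb X0; rewrite raddf0 (srk0 srkA).
apply: contraTeq => b_neq0; rewrite -ltNge faithB //.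
by apply: contra b_neq0 => /eqP/matrixP/(_ 0 0); rewrite !mxE eqxx mulr1n => ->.
Qed.

Lemma jointrep_scalar c : jointrep c%:A c%:A.
Proof. by have := jointrep_poly c%:MP; rewrite !nc_evalC. Qed.

Lemma jointrep_fun {a b b'} : jointrep a b -> jointrep a b' -> b = b'.
Proof.
move=> ab ab'; apply/eqP; rewrite -subr_eq0; apply/eqP/jointrep0.
by rewrite -(subrr a); apply: jointrep_add ab (jointrep_opp ab').
Qed.

Lemma jointrep_rank_le {a b} : jointrep a b -> rkB 1 1 b%:M <= rkA 1 1 a%:M.
Proof. by move=> [n [M [u [v [Yb Xa]]]]]; apply: linrep_rank_le Yb Xa. Qed.

Definition spec_dom : pred A := fun a => `[< exists b, jointrep a b >].

Definition spec (a : A) : B := xget 0 (jointrep a).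

Lemma specE {a b} : jointrep a b -> spec a = b.
Proof. by move=> ab; apply: xget_subset1 ab _ => b1 b2; apply: jointrep_fun. Qed.

Lemma spec_domP {a b} : jointrep a b -> a \in spec_dom.
Proof. by move=> ab; apply/asboolP; exists b. Qed.

Lemma spec_dom_jointrep a : a \in spec_dom -> jointrep a (spec a).
Proof. by move/asboolP => [b ab]; rewrite (specE ab). Qed.

Lemma subhom_spec : subhom X Y spec_dom spec.
Proof.
have j11 : jointrep 1 1 by have := jointrep_poly 1; rewrite !rmorph1.
split.
- move=> a /spec_dom_jointrep [n [M [u [v [_ Xa]]]]]; exact: linrep_rat_closure Xa.
- split; first exact: spec_domP j11.
  + move=> c a1 a2 /spec_dom_jointrep j1 /spec_dom_jointrep j2; rewrite -mulr_algl.
    exact: spec_domP (jointrep_add (jointrep_mul (jointrep_scalar c) j1) j2).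
  + move=> a1 a2 /spec_dom_jointrep j1 /spec_dom_jointrep j2.
    exact: spec_domP (jointrep_mul j1 j2).
- by move=> p; apply: spec_domP (jointrep_poly p).
- exact: specE j11.
- move=> a1 a2 /spec_dom_jointrep j1 /spec_dom_jointrep j2.
  exact: specE (jointrep_add j1 j2).
- move=> a1 a2 /spec_dom_jointrep j1 /spec_dom_jointrep j2.
  exact: specE (jointrep_mul j1 j2).
- move=> c a /spec_dom_jointrep ja; rewrite -[c *: a]mulr_algl -[c *: spec a]mulr_algl.
  exact: specE (jointrep_mul (jointrep_scalar c) ja).
- move=> a /spec_dom_jointrep [n [M [u [v [Yb _]]]]]; exact: linrep_rat_closure Yb.
- by move=> p; apply: specE (jointrep_poly p).
- move=> n M [NY [_ [MNY NYM]]].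
  have [NX MNX] := evalmx_invertible_transfer (ex_intro _ NY (conj MNY NYM)).
  exists NX; split; last exact: MNX.
  move=> i j; apply: (@spec_domP _ (NY i j)).
  by exists n, M, (delta_mx 0 i), (delta_mx j 0); split; apply: linrep_entry.
Qed.

Lemma subhom_restrict_spec S f : subhom X Y S f ->
  forall a, a \in spec_dom -> a \in S /\ f a = spec a.
Proof.
move=> fS a /spec_dom_jointrep [n [M [u [v [Yb Xa]]]]].
by have [] := subhom_linrep fS Yb Xa.
Qed.

Lemma rat_closure_unique_specialization : unique_specialization X Y.
Proof.
split; first by exists spec_dom, spec; exact: subhom_spec.
move=> S1 f1 S2 f2 /subhom_restrict_spec f1S1 /subhom_restrict_spec f2S2.
exists spec_dom; split.
- by move=> a /f1S1 [].
- by move=> a /f2S2 [].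
- by move=> a ad; rewrite (f1S1 _ ad).2 (f2S2 _ ad).2.
- by apply: (subhom_eq_in subhom_spec) => a /f1S1 [_ ->].
Qed.

Lemma rexpr_eval_jointrep {r b} :
  rexpr_eval Y r b -> exists2 a, rexpr_eval X r a & jointrep a b.
Proof.
elim=> {r b}.
- by move=> c; exists c%:A; [constructor | exact: jointrep_scalar].
- move=> i; exists (X i); first by constructor.
  by have := jointrep_poly << (1 : R[i]) *g fmu i >>; rewrite !nc_eval_var.
- move=> r s b b' _ [a ra ab] _ [a' sa' ab'].
  by exists (a + a'); [exact: REvAdd | exact: jointrep_add].
- move=> r s b b' _ [a ra ab] _ [a' sa' ab'].
  by exists (a * a'); [exact: REvMul | exact: jointrep_mul].
- move=> r b b' _ [a ra ab] bb' b'b.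
  have [a' [aa' a'a a'b']] := jointrep_inv ab bb' b'b.
  by exists a'; first exact: REvInv ra aa' a'a.
Qed.

Lemma rexpr_eval_rank_le r b : rexpr_eval Y r b ->
  exists a, rexpr_eval X r a /\
    forall b', rexpr_eval Y r b' -> rkB 1 1 b'%:M <= rkA 1 1 a%:M.
Proof.
move=> rb; have [a ra ab] := rexpr_eval_jointrep rb.
by exists a; split => // b' rb'; rewrite (rexpr_eval_fun rb' rb); apply: jointrep_rank_le.
Qed.

End Specialization.

Theorem proposition2p21 (R : realType) (A B : algType R[i])
    (rkA : rank_fun A) (rkB : rank_fun B)
    (srkA : sylvester_rank rkA) (fA : rank_faithful rkA) (gA : rank_regular rkA)
    (srkB : sylvester_rank rkB) (fB : rank_faithful rkB) (gB : rank_regular rkB)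
    (d : nat) (X : 'I_d -> A) (Y : 'I_d -> B)
    (hXY : forall m n (P : 'M[ncpoly R d]_(m, n)),
        rkB m n (nc_evalmx Y P) <= rkA m n (nc_evalmx X P)) :
  unique_specialization X Y /\
  (forall r : rexpr R d,
      (exists b, rexpr_eval Y r b) ->
      exists a, rexpr_eval X r a /\
        forall b, rexpr_eval Y r b -> rkB 1%N 1%N b%:M <= rkA 1%N 1%N a%:M).
Proof.
split; first exact: (rat_closure_unique_specialization srkA gA srkB fB hXY).
by move=> r [b]; exact: (rexpr_eval_rank_le srkA gA srkB hXY).
Qed.
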